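(* A regular Hausdorff space $X$ is a $\gamma$-space if and only if $\mathcal{F}(X)$ is a $\gamma$-space.
   Context: $\mathcal{F}(X)$ is the set of nonempty finite subsets of $X$ with the Vietoris topology (base: $\langle U_1,\dots,U_k\rangle=\{A: A\subset\bigcup_i U_i,\ A\cap U_j\neq\emptyset\ \forall j\}$, $U_i$ open in $X$). A space $(Y,\tau_Y)$ is a $\gamma$-space if there is a function $g:\omega\times Y\to\tau_Y$ such that (i) $\{g(n,x): n\in\omega\}$ is a neighborhood base at $x$ for each $x\in Y$, and (ii) for each $n\in\omega$ and $x\in Y$ there is $m\in\omega$ such that $y\in g(m,x)$ implies $g(n,y)\subset g(n,x)$. *)

From HB Require Import structures.
From mathcomp Require Import all_boot all_order all_algebra.
From mathcomp Require Import all_classical all_reals all_analysis.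
From Stdlib Require List.
Set Implicit Arguments. Unset Strict Implicit. Unset Printing Implicit Defensive.
Local Open Scope classical_set_scope.

Definition nbhd_in (Y : Type) (op : set (set Y)) (y : Y) (N : set Y) : Prop :=
  exists U, op U /\ U y /\ U `<=` N.

Definition gamma_space_in (Y : Type) (op : set (set Y)) : Prop :=
  exists g : nat -> Y -> set Y,
    (forall n x, op (g n x)) /\
    (forall x, (forall n, nbhd_in op x (g n x)) /\
               (forall N, nbhd_in op x N -> exists n, g n x `<=` N)) /\
    (forall n x, exists m, forall y, g m x y -> g n y `<=` g n x).

Definition gamma_space (X : topologicalType) : Prop := gamma_space_in (@open X).

Definition finsub (X : Type) := {A : set X | finite_set A /\ A !=set0}.

Definition vietoris_basic (X : Type) (s : seq (set X)) : set (finsub X) :=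
  [set A | (proj1_sig A `<=` \bigcup_(U in [set U | List.In U s]) U) /\
           (forall U, List.In U s -> proj1_sig A `&` U !=set0)].

Definition vietoris_open (X : topologicalType) : set (set (finsub X)) :=
  [set W | forall A, W A -> exists s : seq (set X),
     (forall U, List.In U s -> open U) /\ vietoris_basic s A /\
     vietoris_basic s `<=` W].

(* The gamma-function g of X may be taken decreasing in n (replace g n x by
   g 0 x `&` ... `&` g n x).  Then G n A := <g n a : a in A> is a
   gamma-function of F(X): a basic neighbourhood <U_1, ..., U_k> of A contains
   G n A as soon as g n a is included in every U_i containing a, and
   condition (ii) for G at A follows from condition (ii) for g at the
   finitely many points of A; both only need n large, uniformly over the
   finite set A.  Conversely x |-> {x} embeds X into F(X), and
   g n x := {y | {y} \in G n {x}} pulls a gamma-function of F(X) back to X. *)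

From HB Require Import structures.
From mathcomp Require Import all_boot all_order all_algebra.
From mathcomp Require Import all_classical all_reals all_analysis.
From Stdlib Require List.

Set Implicit Arguments.
Unset Strict Implicit.
Unset Printing Implicit Defensive.

Local Open Scope classical_set_scope.

Lemma In_memP (T : eqType) (x : T) (s : seq T) : reflect (List.In x s) (x \in s).
Proof.
elim: s => [|y s IH] /=; first by right.
rewrite in_cons; apply: (iffP orP) => [[/eqP->|/IH]|[->|/IH]]; by [left|right].
Qed.

Lemma finite_set_In (T : eqType) (s : seq T) : finite_set [set t | List.In t s].
Proof.
by apply/finite_seqP; exists s; apply/seteqP; split=> t /=; move/In_memP.
Qed.

Lemma near_finite_forall (T : choiceType) (U : Type) (F : set_system U)
    (A : set T) (P : T -> U -> Prop) :
  Filter F -> finite_set A -> (forall t, A t -> \forall x \near F, P t x) ->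
  \forall x \near F, forall t, A t -> P t x.
Proof.
move=> FF /finite_fsetP[D ->] AP.
by apply: filterS (filter_bigI (f := P) FF AP) => x DP t Dt; exact: DP.
Qed.

Lemma near_infty_monotone (P : nat -> Prop) :
  (forall m n, (m <= n)%N -> P m -> P n) -> (exists n, P n) ->
  \forall n \near \oo, P n.
Proof. by move=> Pmono [m Pm]; exists m => // n /= mn; exact: Pmono Pm. Qed.

Definition gamma_function (Y : Type) (op : set (set Y)) (g : nat -> Y -> set Y) :=
  (forall n x, op (g n x)) /\
  (forall x, (forall n, nbhd_in op x (g n x)) /\
             (forall N, nbhd_in op x N -> exists n, g n x `<=` N)) /\
  (forall n x, exists m, forall y, g m x y -> g n y `<=` g n x).

Section GammaFunction.
Variables (Y : Type) (op : set (set Y)).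

Lemma nbhd_in_open (x : Y) U : op U -> U x -> nbhd_in op x U.
Proof. by exists U; split=> //; split. Qed.

Lemma gamma_function_intro (g : nat -> Y -> set Y) :
  (forall n x, op (g n x)) -> (forall n x, g n x x) ->
  (forall x U, op U -> U x -> exists n, g n x `<=` U) ->
  (forall n x, exists m, forall y, g m x y -> g n y `<=` g n x) ->
  gamma_function op g.
Proof.
move=> gop gx gbase gii; split=> //; split=> // x; split=> [n|N [U [Uop [Ux UN]]]].
  exact: nbhd_in_open.
by have [n gU] := gbase x U Uop Ux; exists n; apply: subset_trans UN.
Qed.

Variable g : nat -> Y -> set Y.
Hypothesis gammag : gamma_function op g.

Lemma gamma_function_open n x : op (g n x).
Proof. by case: gammag. Qed.

Lemma gamma_function_mem n x : g n x x.
Proof. by case: gammag => _ [/(_ x) [/(_ n) [U [_ [Ux sU]]] _] _]; exact: sU. Qed.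

Lemma gamma_function_base x U : op U -> U x -> exists n, g n x `<=` U.
Proof. by case: gammag => _ [/(_ x) [_ gbase] _] Uop Ux; exact/gbase/nbhd_in_open. Qed.

Lemma gamma_function_trans n x : exists m, forall y, g m x y -> g n y `<=` g n x.
Proof. by case: gammag => _ [_]. Qed.

End GammaFunction.

Fixpoint meet_upto (Y : Type) (g : nat -> Y -> set Y) n x : set Y :=
  if n is k.+1 then meet_upto g k x `&` g k.+1 x else g 0%N x.

Lemma meet_upto_nonincreasing (Y : Type) (g : nat -> Y -> set Y) x m n :
  (m <= n)%N -> meet_upto g n x `<=` meet_upto g m x.
Proof. by move=> /subnK <-; elim: (n - m)%N => [|k IH] //= y [/IH]. Qed.

Lemma meet_upto_sub (Y : Type) (g : nat -> Y -> set Y) x m n :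
  (m <= n)%N -> meet_upto g n x `<=` g m x.
Proof.
move=> mn y gy; have := meet_upto_nonincreasing mn gy.
by case: m {mn} => [|m] //= [].
Qed.

Lemma gamma_function_meet_upto (Y : Type) (op : set (set Y)) g :
  setI_closed op -> gamma_function op g -> gamma_function op (meet_upto g).
Proof.
move=> opI gammag; apply: gamma_function_intro.
- move=> + x; elim=> [|n IH] /=; first exact: (gamma_function_open gammag).
  by apply: opI => //; exact: (gamma_function_open gammag).
- move=> + x; elim=> [|n IH] /=; first exact: (gamma_function_mem gammag).
  by split=> //; exact: (gamma_function_mem gammag).
- move=> x U Uop Ux; have [n gU] := gamma_function_base gammag Uop Ux.
  by exists n; apply: subset_trans gU; apply: meet_upto_sub.
- move=> + x; elim=> [|n [m IH]].
    have [m gii] := gamma_function_trans gammag 0%N x.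
    by exists m => y gy; apply: gii; exact: (meet_upto_sub (leqnn m) gy).
  have [k gii] := gamma_function_trans gammag n.+1 x.
  exists (maxn m k) => y gy z /= [gnz gSz]; split.
    by apply: IH gnz; apply: meet_upto_nonincreasing gy; exact: leq_maxl.
  by apply: gii gSz; apply: meet_upto_sub gy; exact: leq_maxr.
Qed.

Definition vietoris_set (X : Type) (F : set (set X)) : set (finsub X) :=
  [set C | proj1_sig C `<=` \bigcup_(U in F) U /\
           forall U, F U -> proj1_sig C `&` U !=set0].

Definition finsub1 (X : Type) (x : X) : finsub X :=
  exist _ [set x] (conj (finite_set1 x) (ex_intro _ x erefl)).

Section VietorisSet.
Variable X : Type.

Lemma vietoris_set_image_self (h : X -> set X) (A : finsub X) :
  (forall a, h a a) -> vietoris_set (h @` proj1_sig A) A.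
Proof.
by move=> hx; split=> [a Aa|_ [a Aa <-]]; [exists (h a) | exists a].
Qed.

Lemma vietoris_set_image_sub (h : X -> set X) (F : set (set X)) (A : finsub X) :
  (forall a, proj1_sig A a -> forall U, F U -> U a -> h a `<=` U) ->
  vietoris_set F A -> vietoris_set (h @` proj1_sig A) `<=` vietoris_set F.
Proof.
move=> hU [AF FA] C [Ch hC]; split.
  move=> c /Ch [_ [a Aa <-] hac]; have [U FU Ua] := AF a Aa.
  by exists U => //; exact: hU hac.
move=> U FU; have [a [Aa Ua]] := FA U FU.
have [c [Cc hac]] := hC (h a) (imageP _ Aa).
by exists c; split => //; exact: hU hac.
Qed.

Lemma vietoris_set_image_trans (h k : X -> set X) (A B : finsub X) :
  (forall a, proj1_sig A a -> forall b, k a b -> h b `<=` h a) ->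
  vietoris_set (k @` proj1_sig A) B ->
  vietoris_set (h @` proj1_sig B) `<=` vietoris_set (h @` proj1_sig A).
Proof.
move=> hk [Bk kB] C [Ch hC]; split.
  move=> c /Ch [_ [b Bb <-] hbc]; have [_ [a Aa <-] kab] := Bk b Bb.
  by exists (h a); [exists a | exact: hk hbc].
move=> _ [a Aa <-]; have [b [Bb kab]] := kB (k a) (imageP _ Aa).
have [c [Cc hbc]] := hC (h b) (imageP _ Bb).
by exists c; split => //; exact: hk hbc.
Qed.

End VietorisSet.

Section VietorisTopology.
Variable X : topologicalType.

Lemma vietoris_open_set (F : set (set X)) :
  finite_set F -> (forall U, F U -> open U) -> vietoris_open (vietoris_set F).
Proof.
move=> /finite_seqP[s ->] Fop A FA; exists s; split.
  by move=> U /In_memP; exact: Fop.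
suff -> : vietoris_basic s = vietoris_set [set` s] by split.
by congr vietoris_set; apply/seteqP; split=> U /In_memP.
Qed.

Lemma vietoris_open_subsets (U : set X) :
  open U -> vietoris_open [set C | proj1_sig C `<=` U].
Proof.
move=> Uop C CU; exists [:: U]; split; first by move=> _ [<-|[]].
split; last by move=> D [DU _] d /DU [_ [<-|[]]].
split; first by move=> c Cc; exists U; [left | exact: CU].
move=> _ [<-|[]]; have [c Cc] := proj2 (proj2_sig C).
by exists c; split => //; exact: CU.
Qed.

Lemma open_preimage_finsub1 (W : set (finsub X)) :
  vietoris_open W -> open (@finsub1 X @^-1` W).
Proof.
rewrite openE => Wop y /= Wy.
have [s [sop [[ys sy] sW]]] := Wop _ Wy.
have [U0 sU0 _] := ys y erefl.
have near_s : \forall z \near y, forall U, List.In U s -> U z.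
  apply: near_finite_forall; first exact: finite_set_In.
  move=> U sU; apply: open_nbhs_nbhs; split; first exact: sop.
  by have [_ [/= -> Uy]] := sy U sU.
apply: filterS near_s => z sz; apply: sW; split.
  by move=> _ /= ->; exists U0 => //; exact: sz.
by move=> U sU; exists z; split => //; exact: sz.
Qed.

End VietorisTopology.

Lemma gamma_space_in_comap (X Y : Type) (opX : set (set X)) (opY : set (set Y))
    (f : X -> Y) :
  (forall W, opY W -> opX (f @^-1` W)) ->
  (forall U x, opX U -> U x -> exists2 W, opY W /\ W (f x) & f @^-1` W `<=` U) ->
  gamma_space_in opY -> gamma_space_in opX.
Proof.
move=> fcont finit [G gammaG]; exists (fun n x => f @^-1` G n (f x)).
apply: gamma_function_intro.
- by move=> n x; apply: fcont; exact: (gamma_function_open gammaG).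
- by move=> n x; exact: (gamma_function_mem gammaG).
- move=> x U Uop Ux; have [W [Wop Wfx] WU] := finit U x Uop Ux.
  have [n GW] := gamma_function_base gammaG Wop Wfx.
  by exists n => y /GW /WU.
- move=> n x; have [m GG] := gamma_function_trans gammaG n (f x).
  by exists m => y /GG GyGx z /GyGx.
Qed.

Section VietorisGamma.
Variable X : topologicalType.

Lemma gamma_function_vietoris (g : nat -> X -> set X) :
  gamma_function open g -> (forall x m n, (m <= n)%N -> g n x `<=` g m x) ->
  gamma_function (@vietoris_open X) (fun n A => vietoris_set (g n @` proj1_sig A)).
Proof.
move=> gammag gdecr; apply: gamma_function_intro.
- move=> n A; apply: vietoris_open_set.
    exact/finite_image/(proj1 (proj2_sig A)).
  by move=> _ [a _ <-]; exact: (gamma_function_open gammag).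
- by move=> n A; apply: vietoris_set_image_self; exact: (gamma_function_mem gammag).
- move=> A W Wop WA; have [s [sop [sA sW]]] := Wop A WA.
  have : \forall n \near \oo, forall a, proj1_sig A a ->
      forall U, List.In U s -> U a -> g n a `<=` U.
    apply: near_finite_forall => [|a _]; first exact: (proj1 (proj2_sig A)).
    apply: near_finite_forall => [|U sU]; first exact: finite_set_In.
    apply: near_infty_monotone => [m n mn gmU Ua|].
      by apply: subset_trans (gmU Ua); exact: gdecr.
    have [Ua|nUa] := pselect (U a); last by exists 0%N.
    by have [n gU] := gamma_function_base gammag (sop U sU) Ua; exists n.
  move=> /filter_ex[M gM]; exists M; apply: subset_trans sW.
  exact: (vietoris_set_image_sub gM sA).
- move=> n A.
  have : \forall m \near \oo, forall a, proj1_sig A a ->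
      forall b, g m a b -> g n b `<=` g n a.
    apply: near_finite_forall => [|a _]; first exact: (proj1 (proj2_sig A)).
    apply: near_infty_monotone; last exact: (gamma_function_trans gammag).
    by move=> m m' mm' gm b /(gdecr _ _ _ mm'); exact: gm.
  move=> /filter_ex[m gm]; exists m => B; exact: vietoris_set_image_trans.
Qed.

Lemma gamma_space_vietoris : gamma_space X -> gamma_space_in (@vietoris_open X).
Proof.
move=> [g gammag]; exists (fun n A => vietoris_set (meet_upto g n @` proj1_sig A)).
apply: gamma_function_vietoris; first exact: (gamma_function_meet_upto (@openI X)).
by move=> x m n; exact: meet_upto_nonincreasing.
Qed.

Lemma gamma_space_of_vietoris : gamma_space_in (@vietoris_open X) -> gamma_space X.
Proof.
apply: (gamma_space_in_comap (f := @finsub1 X)); first exact: open_preimage_finsub1.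
move=> U x Uop Ux; exists [set C | proj1_sig C `<=` U].
  by split; [exact: vietoris_open_subsets | move=> _ /= ->].
by move=> y /= yU; exact: yU.
Qed.

End VietorisGamma.

Theorem theorem4p10 (X : topologicalType) :
  regular_space X -> hausdorff_space X ->
  (gamma_space X <-> gamma_space_in (@vietoris_open X)).
Proof.
by move=> _ _; split; [exact: gamma_space_vietoris | exact: gamma_space_of_vietoris].
Qed.
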